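(* Let $(X_n)_{n\ge0}$ be a Markov chain on $\mathbb Z_+$ with transition matrix $P$. Assume that for every $i\in\mathbb Z_+$ there is a positive non-increasing function $g_i$ on $\mathbb Z_+$ such that $g_i(X_n)$ is a supermartingale (i.e. $\sum_k P(j,k)g_i(k)\le g_i(j)$ for all $j\in\mathbb Z_+$), and that $$p_1:=\sup_{i\ge1}\frac{g_i(i)}{g_i(i-1)}<1,\qquad p_2:=\inf_{i\ge0}\mathbb P_i\{X_1\ge i+1\}>0.$$ Then there exists $\gamma>0$ such that $\sup_{i\in\mathbb Z_+}\mathbb E_ie^{\gamma\ell(i)}<\infty$.
   Context: $\mathbb P_i,\mathbb E_i$ denote probability and expectation given $X_0=i$; the local time at $i$ is $\ell(i):=\sum_{n=0}^\infty\mathbf 1\{X_n=i\}$. *)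

From Stdlib Require Import Reals Lra Lia Arith.
Open Scope R_scope.

Definition stochastic (P : nat -> nat -> R) : Prop :=
  (forall j k, 0 <= P j k) /\ (forall j, infinite_sum (P j) 1).

Definition ind_eq (j i : nat) : R := if Nat.eqb j i then 1 else 0.

(* F N j = E_j [ exp (gam * l_N(i)) ], where l_N(i) = #{ 0 <= n < N : X_n = i }
   is the local time at i truncated at time N. *)
Definition trunc_exp_local_time (P : nat -> nat -> R) (gam : R) (i : nat)
  (F : nat -> nat -> R) : Prop :=
  (forall j, F 0%nat j = 1) /\
  (forall N j, exists s, infinite_sum (fun k => P j k * F N k) s /\
                         F (S N) j = exp (gam * ind_eq j i) * s).

From Stdlib Require Import Reals Lra Lia Arith.
Open Scope R_scope.

(* Fix i and let G := g_(i+1).  The function u(k) := min(1, G(k)/G(i)) is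
   superharmonic (a minimum of superharmonic functions), equals 1 at i and is
   at most p1 on {k >= i+1}.  Hence h := 1 + u is superharmonic, and from i
   its mean after one step is at most 2 - (1 - p1) p2 < 2.  Choosing e^gam
   so that e^gam times that mean is still at most 2 = h(i), the function h
   dominates E_j e^(gam l_N(i)) for every N by induction on N, so these
   expectations are bounded by 2. *)

Lemma Un_cv_const (c : R) : Un_cv (fun _ => c) c.
Proof. intros eps eps_pos; exists 0%nat; intros; rewrite R_dist_eq; lra. Qed.

Lemma infinite_sum_le a b la lb :
  (forall k, a k <= b k) -> infinite_sum a la -> infinite_sum b lb -> la <= lb.
Proof.
  intros a_le_b; apply Rle_cv_lim; intro n; apply sum_Rle; intros k _; apply a_le_b.
Qed.

Lemma infinite_sum_le_bound a l B :
  (forall n, sum_f_R0 a n <= B) -> infinite_sum a l -> l <= B.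
Proof. intros bounded sum_a; exact (Rle_cv_lim bounded sum_a (Un_cv_const B)). Qed.

Lemma infinite_sum_scal a l c :
  infinite_sum a l -> infinite_sum (fun k => a k * c) (l * c).
Proof.
  intro sum_a; apply (Un_cv_ext (fun n => sum_f_R0 a n * c)).
  - intro n; rewrite <- scal_sum; ring.
  - exact (CV_mult _ _ _ _ sum_a (Un_cv_const c)).
Qed.

Lemma infinite_sum_minus a b la lb :
  infinite_sum a la -> infinite_sum b lb -> infinite_sum (fun k => a k - b k) (la - lb).
Proof.
  intros sum_a sum_b; apply (Un_cv_ext (fun n => sum_f_R0 a n - sum_f_R0 b n)).
  - intro n; symmetry; apply minus_sum.
  - exact (CV_minus _ _ _ _ sum_a sum_b).
Qed.

Lemma ex_pos_exp_mul_eq2 r : 0 < r < 2 -> exists gam, 0 < gam /\ exp gam * r = 2.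
Proof.
  intro r_bounds; exists (ln (2 / r)); split.
  - rewrite <- ln_1; apply ln_increasing; [lra|].
    apply (Rmult_lt_reg_r r); [lra|]; unfold Rdiv; rewrite Rmult_assoc, Rinv_l; lra.
  - rewrite exp_ln by (apply Rdiv_lt_0_compat; lra); field; lra.
Qed.

Section StochasticMatrix.

Variable P : nat -> nat -> R.
Hypothesis P_ge0 : forall j k, 0 <= P j k.
Hypothesis P_sum1 : forall j, infinite_sum (P j) 1.

Lemma row_partial_sum_le1 j n : sum_f_R0 (P j) n <= 1.
Proof. exact (sum_incr _ _ _ (P_sum1 j) (P_ge0 j)). Qed.

Lemma ex_mean_bounded (h : nat -> R) c j :
  (forall k, 0 <= h k <= c) -> exists s, infinite_sum (fun k => P j k * h k) s.
Proof.
  intro h_bounds.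
  destruct (Rseries_CV_comp (fun k => P j k * h k) (fun k => P j k * c)) as [s sum_Ph].
  - intro k; destruct (h_bounds k); split.
    + apply Rmult_le_pos; auto.
    + apply Rmult_le_compat_l; auto.
  - exists (1 * c); exact (infinite_sum_scal _ _ c (P_sum1 j)).
  - exists s; exact sum_Ph.
Qed.

(* Stated with partial sums, so that it makes sense without knowing that the
   series converge. *)
Definition superharmonic (h : nat -> R) : Prop :=
  forall j n, sum_f_R0 (fun k => P j k * h k) n <= h j.

Lemma superharmonic_of_mean (h : nat -> R) :
  (forall k, 0 <= h k) ->
  (forall j, exists s, infinite_sum (fun k => P j k * h k) s /\ s <= h j) ->
  superharmonic h.
Proof.
  intros h_ge0 h_mean j n; destruct (h_mean j) as [s [sum_Ph s_le]].
  apply (Rle_trans _ s); [|exact s_le].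
  apply (sum_incr _ _ _ sum_Ph); intro k; apply Rmult_le_pos; auto.
Qed.

Lemma superharmonic_scal (h : nat -> R) c :
  0 <= c -> superharmonic h -> superharmonic (fun k => h k * c).
Proof.
  intros c_ge0 h_super j n.
  rewrite (sum_eq _ (fun k => P j k * h k * c)) by (intros; ring).
  rewrite <- scal_sum, Rmult_comm.
  apply Rmult_le_compat_r; auto.
Qed.

Lemma superharmonic_const c : 0 <= c -> superharmonic (fun _ => c).
Proof.
  intros c_ge0 j n; rewrite <- scal_sum.
  specialize (row_partial_sum_le1 j n); nra.
Qed.

Lemma superharmonic_plus (h1 h2 : nat -> R) :
  superharmonic h1 -> superharmonic h2 -> superharmonic (fun k => h1 k + h2 k).
Proof.
  intros h1_super h2_super j n.
  rewrite (sum_eq _ (fun k => P j k * h1 k + P j k * h2 k)) by (intros; ring).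
  rewrite plus_sum; specialize (h1_super j n); specialize (h2_super j n); lra.
Qed.

Lemma superharmonic_min (h1 h2 : nat -> R) :
  superharmonic h1 -> superharmonic h2 -> superharmonic (fun k => Rmin (h1 k) (h2 k)).
Proof.
  intros h1_super h2_super j n; apply Rmin_glb.
  - eapply Rle_trans; [|apply h1_super]; apply sum_Rle; intros k _.
    apply Rmult_le_compat_l; [apply P_ge0 | apply Rmin_l].
  - eapply Rle_trans; [|apply h2_super]; apply sum_Rle; intros k _.
    apply Rmult_le_compat_l; [apply P_ge0 | apply Rmin_r].
Qed.

Lemma trunc_exp_local_time_le gam i F (h : nat -> R) :
  (forall j, 1 <= h j) ->
  (forall j, exists s, infinite_sum (fun k => P j k * h k) s /\
                       exp (gam * ind_eq j i) * s <= h j) ->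
  trunc_exp_local_time P gam i F -> forall N j, F N j <= h j.
Proof.
  intros h_ge1 h_weighted [F0 FS] N; induction N as [|N IH]; intro j.
  - rewrite F0; apply h_ge1.
  - destruct (FS N j) as [s [sum_PF ->]]; destruct (h_weighted j) as [t [sum_Ph t_le]].
    apply (Rle_trans _ (exp (gam * ind_eq j i) * t)); [|exact t_le].
    apply Rmult_le_compat_l; [apply Rlt_le, exp_pos|].
    apply (infinite_sum_le _ _ _ _ (fun k => Rmult_le_compat_l _ _ _ (P_ge0 j k) (IH k))
             sum_PF sum_Ph).
Qed.

Lemma mean_one_plus_le_at_start i (u : nat -> R) p1 s t :
  (forall k, u k <= 1) -> (forall k, (S i <= k)%nat -> u k <= p1) ->
  infinite_sum (fun k => P i k * (1 + u k)) s ->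
  infinite_sum (fun k => if Nat.leb (S i) k then P i k else 0) t ->
  s <= 2 - (1 - p1) * t.
Proof.
  intros u_le1 u_le_p1 sum_s sum_t.
  replace (2 - (1 - p1) * t) with (1 * 2 - t * (1 - p1)) by ring.
  refine (infinite_sum_le _ _ _ _ _ sum_s
           (infinite_sum_minus _ _ _ _ (infinite_sum_scal _ _ 2 (P_sum1 i))
                                       (infinite_sum_scal _ _ (1 - p1) sum_t))).
  intro k; cbv beta; specialize (P_ge0 i k); specialize (u_le1 k).
  destruct (Nat.leb_spec (S i) k) as [ik | ki].
  - specialize (u_le_p1 k ik); nra.
  - nra.
Qed.

End StochasticMatrix.

Definition capped_ratio (G : nat -> R) (i k : nat) : R := Rmin 1 (G k / G i).

Section CappedRatio.

Variable G : nat -> R.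
Hypothesis G_pos : forall k, 0 < G k.
Hypothesis G_noninc : forall j k, (j <= k)%nat -> G k <= G j.
Variable i : nat.

Lemma capped_ratio_bounds k : 0 <= capped_ratio G i k <= 1.
Proof.
  split; [|apply Rmin_l].
  apply Rmin_glb; [lra|]; apply Rlt_le, Rdiv_lt_0_compat; apply G_pos.
Qed.

Lemma capped_ratio_self : capped_ratio G i i = 1.
Proof.
  unfold capped_ratio; rewrite Rdiv_diag by (specialize (G_pos i); lra).
  apply Rmin_left; lra.
Qed.

Lemma capped_ratio_le_step k : (S i <= k)%nat -> capped_ratio G i k <= G (S i) / G i.
Proof.
  intro ik; eapply Rle_trans; [apply Rmin_r|].
  apply Rmult_le_compat_r; [apply Rlt_le, Rinv_0_lt_compat, G_pos | apply G_noninc, ik].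
Qed.

Variable P : nat -> nat -> R.
Hypothesis P_ge0 : forall j k, 0 <= P j k.
Hypothesis P_sum1 : forall j, infinite_sum (P j) 1.
Hypothesis G_super : superharmonic P G.

Lemma superharmonic_capped_ratio : superharmonic P (capped_ratio G i).
Proof.
  apply (superharmonic_min P P_ge0 (fun _ => 1) (fun k => G k * / G i)).
  - apply superharmonic_const; auto; lra.
  - apply superharmonic_scal; auto; apply Rlt_le, Rinv_0_lt_compat, G_pos.
Qed.

Lemma one_plus_capped_ratio_weighted_superharmonic (p1 gam r : R) (j : nat) :
  G (S i) / G i <= p1 ->
  (exists t, infinite_sum (fun k => if Nat.leb (S i) k then P i k else 0) t /\
             2 - (1 - p1) * t <= r) ->
  exp gam * r <= 2 ->
  exists s, infinite_sum (fun k => P j k * (1 + capped_ratio G i k)) s /\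
            exp (gam * ind_eq j i) * s <= 1 + capped_ratio G i j.
Proof.
  intros step_le escape exp_r.
  destruct (ex_mean_bounded P P_ge0 P_sum1 (fun k => 1 + capped_ratio G i k) 2 j)
    as [s sum_s].
  { intro k; destruct (capped_ratio_bounds k); lra. }
  exists s; split; [exact sum_s|].
  unfold ind_eq; destruct (Nat.eqb_spec j i) as [-> | _].
  - destruct escape as [t [sum_t t_le]].
    assert (s_le : s <= 2 - (1 - p1) * t).
    { apply (mean_one_plus_le_at_start P P_ge0 P_sum1 i (capped_ratio G i) p1 s t); auto.
      - intro k; apply capped_ratio_bounds.
      - intros k ik; exact (Rle_trans _ _ _ (capped_ratio_le_step k ik) step_le). }
    rewrite capped_ratio_self, Rmult_1_r.
    apply (Rle_trans _ (exp gam * r)); [|lra].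
    apply Rmult_le_compat_l; [apply Rlt_le, exp_pos | lra].
  - rewrite Rmult_0_r, exp_0, Rmult_1_l.
    apply (infinite_sum_le_bound _ _ _ (fun n => superharmonic_plus P _ _
             (superharmonic_const P P_ge0 P_sum1 1 Rle_0_1)
             superharmonic_capped_ratio j n) sum_s).
Qed.

End CappedRatio.

Theorem proposition5 (P : nat -> nat -> R) (g : nat -> nat -> R) :
  stochastic P ->
  (forall i k, 0 < g i k) ->
  (forall i j k, (j <= k)%nat -> g i k <= g i j) ->
  (forall i j, exists s, infinite_sum (fun k => P j k * g i k) s /\ s <= g i j) ->
  (exists p1, p1 < 1 /\ forall i, (1 <= i)%nat -> g i i / g i (i - 1)%nat <= p1) ->
  (exists p2, 0 < p2 /\ forall i, exists s,
       infinite_sum (fun k => if Nat.leb (S i) k then P i k else 0) s /\ p2 <= s) ->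
  exists gam, 0 < gam /\ exists M : R,
    forall i (F : nat -> nat -> R), trunc_exp_local_time P gam i F ->
      forall N, F N i <= M.
Proof.
  intros [P_ge0 P_sum1] g_pos g_noninc g_mean [p1 [p1_lt1 g_ratio]] [p2 [p2_pos escape]].
  (* The max with 1 keeps r positive without a sign analysis of p1. *)
  set (r := Rmax 1 (2 - (1 - p1) * p2)).
  assert (r_ge1 : 1 <= r) by apply Rmax_l.
  assert (r_lt2 : r < 2) by (apply Rmax_lub_lt; nra).
  destruct (ex_pos_exp_mul_eq2 r) as [gam [gam_pos exp_r]]; [lra|].
  exists gam; split; [exact gam_pos|].
  exists 2; intros i F HF N.
  set (G := g (S i)).
  assert (G_pos : forall k, 0 < G k) by (intro; apply g_pos).
  assert (G_super : superharmonic P G).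
  { apply (superharmonic_of_mean P P_ge0); [intro; apply Rlt_le, G_pos | apply g_mean]. }
  assert (step_le : G (S i) / G i <= p1).
  { replace i with (S i - 1)%nat at 2 by lia; apply g_ratio; lia. }
  apply (Rle_trans _ (1 + capped_ratio G i i)); [|rewrite capped_ratio_self; auto; lra].
  apply (trunc_exp_local_time_le P P_ge0 gam i F (fun k => 1 + capped_ratio G i k));
    [| |exact HF].
  - intro j; destruct (capped_ratio_bounds G G_pos i j); lra.
  - intro j; apply (one_plus_capped_ratio_weighted_superharmonic G G_pos (g_noninc (S i))
                      i P P_ge0 P_sum1 G_super p1 gam r); [exact step_le| |lra].
    destruct (escape i) as [t [sum_t p2_le]]; exists t; split; [exact sum_t|].
    assert (2 - (1 - p1) * p2 <= r) by apply Rmax_r; nra.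
Qed.
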